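(* Let $p$ be an odd prime, $q\geq1$, and let $L=L(x,dx)$ be the free differential graded Lie algebra over $\mathbb{Z}/p$ on generators $x$ of degree $q+1$ and $y=dx$ of degree $q$. Suppose $L=H\oplus K$ where $K$ is a differential submodule (acyclic) with a basis $\{x_\alpha,y_\alpha,z_\beta,w_\beta\}_{\alpha\in\mathscr I,\beta\in\mathscr J}$ of homogeneous elements with $d x_\alpha=y_\alpha$, $\deg x_\alpha$ even, $dz_\beta=w_\beta$, $\deg z_\beta$ odd. Let $\sigma\subset L$ be the subspace spanned by $\{\sigma_k(x_\alpha):\alpha\in\mathscr I,k\geq1\}$ and $\sigma_N$ its degree-$N$ part. Then for every positive integer $N$, $$\dim_{\mathbb{Z}/p}\sigma_N\leq c_1\,N\,\varphi^{N/p},\qquad c_1=2(q+2)\varphi^{2/p},$$ where $\varphi$ is the unique positive real root of $z^{q+1}-z-1$.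
   Context: For an even-degree element $u$ of a differential graded Lie algebra over $\mathbb{Z}/p$ ($p$ odd), with $\mathrm{ad}(u)(v)=[u,v]$, define $$\tau_k(u)=\mathrm{ad}^{p^k-1}(u)(du),\qquad \sigma_k(u)=\frac12\sum_{j=1}^{p^k-1}\frac1p\binom{p^k}{j}\big[\mathrm{ad}^{j-1}(u)(du),\ \mathrm{ad}^{p^k-1-j}(u)(du)\big].$$ Note $\deg\sigma_k(u)=p^k\deg u-2$. *)

From mathcomp Require Import all_boot all_order all_algebra.
From mathcomp Require Import reals exp.
Set Implicit Arguments. Unset Strict Implicit. Unset Printing Implicit Defensive.
Import Order.TTheory GRing.Theory Num.Theory.
Local Open Scope ring_scope.

(* The tensor algebra T(x, y) over Z/p on two generators, realised as
   functions from words to 'F_p (a word is a seq bool: true = x, false = y).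
   Elements of the free Lie algebra L(x,dx) are finite sums of homogeneous
   elements and hence finitely supported. *)
Definition word := seq bool.
Definition T (p : nat) := word -> 'F_p.

Definition wdeg (q : nat) (w : word) : nat :=
  (\sum_(b <- w) (if b then q.+1 else q))%N.

Definition homog (p q : nat) (N : nat) (a : T p) : Prop :=
  forall w, a w != 0 -> wdeg q w = N.

Definition tzero (p : nat) : T p := fun _ => 0.
Definition tadd (p : nat) (a b : T p) : T p := fun w => a w + b w.
Definition tscale (p : nat) (c : 'F_p) (a : T p) : T p := fun w => c * a w.

Definition genx (p : nat) : T p := fun w => if w == [:: true] then 1 else 0.
Definition geny (p : nat) : T p := fun w => if w == [:: false] then 1 else 0.

(* graded commutator, extended bilinearly:
   [a,b] = sum over homogeneous parts of a_m b_n - (-1)^{mn} b_n a_m *)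
Definition tbracket (p q : nat) (a b : T p) : T p := fun w =>
  \sum_(i < (size w).+1)
     (a (take i w) * b (drop i w)
      - (-1) ^+ (wdeg q (take i w) * wdeg q (drop i w)) * b (take i w) * a (drop i w)).

(* the differential: the derivation of degree -1 with d x = y, d y = 0,
   d(uv) = (du) v + (-1)^{|u|} u (dv) *)
Definition tdiff (p q : nat) (a : T p) : T p := fun w =>
  \sum_(i < size w | nth true w i == false)
     (-1) ^+ (wdeg q (take i w)) * a (set_nth true w i true).

Inductive inL (p q : nat) : T p -> Prop :=
| inL_x : inL q (genx p)
| inL_y : inL q (geny p)
| inL_add a b : inL q a -> inL q b -> inL q (tadd a b)
| inL_scale c a : inL q a -> inL q (tscale c a)
| inL_bracket a b : inL q a -> inL q b -> inL q (tbracket q a b)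
| inL_ext a b : inL q a -> a =1 b -> inL q b.

Definition lincomb (p n : nat) (c : 'I_n -> 'F_p) (v : 'I_n -> T p) : T p :=
  fun w => \sum_(i < n) c i * v i w.

Definition linindep (p n : nat) (v : 'I_n -> T p) : Prop :=
  forall c : 'I_n -> 'F_p, lincomb c v =1 tzero p -> forall i, c i = 0.

Definition family_indep (p : nat) (Idx : Type) (f : Idx -> T p) : Prop :=
  forall n (s : 'I_n -> Idx), injective s -> linindep (fun i => f (s i)).

Definition in_span (p : nat) (Idx : Type) (f : Idx -> T p) (v : T p) : Prop :=
  exists n (s : 'I_n -> Idx) (c : 'I_n -> 'F_p), v =1 lincomb c (fun i => f (s i)).

Definition adpow (p q : nat) (n : nat) (u v : T p) : T p := iter n (tbracket q u) v.

Definition sigmak (p q : nat) (k : nat) (u : T p) : T p := fun w =>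
  (2%:R)^-1 * \sum_(1 <= j < (p ^ k).-1.+1)
     ((('C(p ^ k, j) %/ p)%N)%:R *
      tbracket q (adpow q j.-1 u (tdiff q u))
                 (adpow q ((p ^ k).-1 - j) u (tdiff q u)) w).

Definition in_sigma (p q : nat) (I : Type) (xa : I -> T p) (v : T p) : Prop :=
  in_span (fun ak : I * {k : nat | (1 <= k)%N} => sigmak q (sval ak.2) (xa ak.1)) v.

Definition dim_le (p : nat) (R : realType) (V : T p -> Prop) (B : R) : Prop :=
  forall n (v : 'I_n -> T p), (forall i, V (v i)) -> linindep v -> n%:R <= B.

Definition fam4 (p : nat) (I J : Type) (xa ya : I -> T p) (zb wb : J -> T p)
  (i : (I + I) + (J + J)) : T p :=
  match i with
  | inl (inl a) => xa a | inl (inr a) => ya a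
  | inr (inl b) => zb b | inr (inr b) => wb b end.

(* The bound only uses that the x_alpha are linearly independent homogeneous
   elements of the tensor algebra T(x, y).  The argument:
   - sigma_k(x_alpha) is homogeneous of degree p^k deg x_alpha - 2, so a
     degree-N element of sigma lies in the span of the degree-N parts of those
     sigma_k(x_alpha) with p^k deg x_alpha = N + 2 ("admissible" degrees);
   - by Steinitz exchange, dim sigma_N is at most the number of indices alpha
     of admissible degree (for fixed alpha the exponent k is determined);
   - those x_alpha are independent and supported on words of admissible
     degree, so there are at most as many of them as such words;
   - an admissible degree d satisfies p d <= N + 2, so d <= N, and there are
     at most phi^d <= phi^((N+2)/p) words of degree d, since the number of
     words obeys the recursion c(m) = c(m-q-1) + c(m-q) and phi^(q+1) = phi+1.
   Hence dim sigma_N <= N phi^((N+2)/p) <= c_1 N phi^(N/p). *)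
From mathcomp Require Import all_boot all_order all_algebra.
From mathcomp Require Import boolp reals exp.
From mathcomp Require Import zify ring lra.
Import Order.TTheory GRing.Theory Num.Theory.
Local Open Scope ring_scope.
Set Implicit Arguments. Unset Strict Implicit.

Section WordDegree.
Variable q : nat.

Lemma wdeg_cons b w : wdeg q (b :: w) = ((if b then q.+1 else q) + wdeg q w)%N.
Proof. by rewrite /wdeg big_cons. Qed.

Lemma wdeg_cat w1 w2 : wdeg q (w1 ++ w2) = (wdeg q w1 + wdeg q w2)%N.
Proof. by rewrite /wdeg big_cat. Qed.

Lemma wdeg_set_x w i : (i < size w)%N -> nth true w i = false ->
  wdeg q (set_nth true w i true) = (wdeg q w).+1.
Proof.
elim: w i => [|b w IH] [|i] //= => [_ ->|hi hn]; rewrite !wdeg_cons //.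
by rewrite IH // addnS.
Qed.

(* Every letter has degree at least one when q >= 1. *)
Lemma size_le_wdeg w : (1 <= q)%N -> (size w <= wdeg q w)%N.
Proof. by move=> hq; elim: w => [|b w IH] //=; rewrite wdeg_cons; case: b; lia. Qed.

End WordDegree.

Lemma sum_neq0 (V : nmodType) (X : eqType) (r : seq X) (P : pred X) (F : X -> V) :
  \sum_(i <- r | P i) F i != 0 -> exists i, [/\ i \in r, P i & F i != 0].
Proof.
move=> h; apply/not_existsP => hn; move/eqP: h; apply.
rewrite big_seq_cond big1 // => i /andP[ir Pi].
by case: (eqVneq (F i) 0) => // hF; exfalso; apply: (hn i); split.
Qed.

Section Homogeneity.
Variables p q : nat.

(* [homog_off s D a]: every word in the support of a has degree D - s.
   Carrying the offset s avoids truncated subtraction when d lowers degrees. *)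
Definition homog_off (s D : nat) (a : T p) : Prop :=
  forall w, a w != 0 -> (wdeg q w + s = D)%N.

Lemma homog_offE D a : homog q D a -> homog_off 0 D a.
Proof. by move=> ha w /ha; rewrite addn0. Qed.

Lemma homog_tdiff s D a : homog_off s D a -> homog_off s.+1 D (tdiff q a).
Proof.
move=> ha w /sum_neq0 [i [_ /eqP hi hF]].
have hF' : a (set_nth true w i true) != 0.
  by apply: contra hF => /eqP ->; rewrite mulr0.
by have := ha _ hF'; rewrite wdeg_set_x // addnS.
Qed.

Lemma homog_bracket s1 D1 s2 D2 a b : homog_off s1 D1 a -> homog_off s2 D2 b ->
  homog_off (s1 + s2) (D1 + D2) (tbracket q a b).
Proof.
move=> ha hb w /sum_neq0 [i [_ _ hF]].
have e : wdeg q w = (wdeg q (take i w) + wdeg q (drop i w))%N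
  by rewrite -wdeg_cat cat_take_drop.
have [h1|h1] : (a (take i w) * b (drop i w) != 0) \/
   ((-1) ^+ (wdeg q (take i w) * wdeg q (drop i w)) * b (take i w) * a (drop i w) != 0).
  case: (eqVneq (a (take i w) * b (drop i w)) 0) => h; last by left.
  by right; apply: contra hF => /eqP h'; rewrite h h' subr0.
- have ha1 : a (take i w) != 0 by apply: contra h1 => /eqP ->; rewrite mul0r.
  have hb1 : b (drop i w) != 0 by apply: contra h1 => /eqP ->; rewrite mulr0.
  by have := ha _ ha1; have := hb _ hb1; lia.
- have ha1 : a (drop i w) != 0 by apply: contra h1 => /eqP ->; rewrite mulr0.
  have hb1 : b (take i w) != 0 by apply: contra h1 => /eqP ->; rewrite mulr0 mul0r.
  by have := ha _ ha1; have := hb _ hb1; lia.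
Qed.

Lemma homog_adpow j s1 D1 s2 D2 u v : homog_off s1 D1 u -> homog_off s2 D2 v ->
  homog_off (j * s1 + s2) (j * D1 + D2) (adpow q j u v).
Proof.
move=> hu hv; elim: j => [|j IH] //=.
by have := homog_bracket hu IH; rewrite !mulSn !addnA.
Qed.

(* deg sigma_k(x) = p^k deg x - 2: each summand is a bracket of p^k factors,
   p^k - 2 copies of x and two copies of dx. *)
Lemma homog_sigmak k D x : (1 <= k)%N -> homog_off 0 D x ->
  homog_off 2 (p ^ k * D) (sigmak q k x).
Proof.
move=> hk hx w hw; have hdx := homog_tdiff hx.
have /sum_neq0 [j [jr _ hj]] : \sum_(1 <= j < (p ^ k).-1.+1)
     ((('C(p ^ k, j) %/ p)%N)%:R *
      tbracket q (adpow q j.-1 x (tdiff q x))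
                 (adpow q ((p ^ k).-1 - j) x (tdiff q x)) w) != 0.
  by apply: contra hw; rewrite /sigmak => /eqP ->; rewrite mulr0.
rewrite mem_index_iota in jr.
have /(homog_bracket (homog_adpow (j := j.-1) hx hdx)
   (homog_adpow (j := (p ^ k).-1 - j) hx hdx)) :
  tbracket q (adpow q j.-1 x (tdiff q x)) (adpow q ((p ^ k).-1 - j) x (tdiff q x)) w != 0.
  by apply: contra hj => /eqP ->; rewrite mulr0.
rewrite !muln0 => e.
have -> : (p ^ k = j.-1.+1 + ((p ^ k).-1 - j).+1)%N by lia.
by rewrite mulnDl !mulSn; lia.
Qed.

Definition hpart (N : nat) (a : T p) : T p :=
  fun w => if wdeg q w == N then a w else 0.

Lemma in_span_hpart (X : Type) (f : X -> T p) N v : in_span f v -> homog q N v ->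
  in_span (fun a => hpart N (f a)) v.
Proof.
move=> [n [s [c hv]]] hN; exists n, s, c => w; rewrite /hpart /lincomb.
case: eqP => [_|hw]; first exact: hv.
rewrite big1 => [|i _]; last by rewrite mulr0.
by apply/eqP/negPn/negP => /hN.
Qed.

Lemma hpart_sigmak_eq0 k D x N : (1 <= k)%N -> homog_off 0 D x ->
  (p ^ k * D != N.+2)%N -> hpart N (sigmak q k x) =1 tzero p.
Proof.
move=> hk hx hD w; rewrite /hpart /tzero; case: eqP => // hw.
apply/eqP/negPn/negP => /(homog_sigmak hk hx).
by rewrite hw addn2 => eD; rewrite eD eqxx in hD.
Qed.

End Homogeneity.

Section Span.
Variable p : nat.

(* The coefficient matrix of the v's over the u's would otherwise have a
   nonzero left kernel vector, giving a vanishing combination of the v's. *)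
Lemma linindep_le_span n m (v : 'I_n -> T p) (u : 'I_m -> T p) :
  linindep v -> (forall i, exists c, v i =1 lincomb c u) -> (n <= m)%N.
Proof.
move=> hind /fin_all_exists [C hC].
rewrite leqNgt; apply/negP => hmn.
pose Cm : 'M['F_p]_(n, m) := \matrix_(i, j) C i j.
pose K := kermx Cm.
have /eqP/matrixP : K != 0.
  by rewrite -mxrank_eq0 mxrank_ker; have := rank_leq_col Cm; lia.
move=> /existsNP [i] /existsNP [j] hK.
have hij : K i j != 0 by apply/eqP => e; apply: hK; rewrite e mxE.
have /matrixP hKC : K *m Cm = 0 := mulmx_ker Cm.
suff /(hind _) /(_ j) /eqP : lincomb (fun k => K i k) v =1 tzero p.
  by rewrite (negbTE hij).
move=> w; rewrite /lincomb /tzero.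
under eq_bigr => k _ do rewrite hC /lincomb big_distrr /=.
rewrite exchange_big /= big1 // => l _.
have := hKC i l; rewrite !mxE => e.
rewrite -[RHS](mul0r (u l w)) -[X in _ = X * _]e big_distrl /=.
by apply: eq_bigr => k _; rewrite /Cm mxE mulrA.
Qed.

Lemma sum_tnth_eq (X : eqType) (U : seq X) (a : X) (y : 'F_p) : uniq U ->
  \sum_(j < size U) (if a == tnth (in_tuple U) j then y else 0) =
  if a \in U then y else 0.
Proof.
move=> uU; rewrite -big_mkcond.
rewrite -(big_tnth 0 +%R U (fun b => a == b) (fun _ => y)) /=.
elim: U uU => [|b U IH] /=; first by rewrite big_nil.
move=> /andP[bU uU]; rewrite big_cons IH // in_cons.
case: (eqVneq a b) => [->|ab] /=; last by rewrite ?add0r.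
by rewrite (negbTE bU) addr0.
Qed.

Lemma in_span_seq (X : Type) (f : X -> T p) v : in_span f v ->
  exists l : seq ('F_p * X), forall w, v w = \sum_(x <- l) x.1 * f x.2 w.
Proof.
move=> [n [s [c h]]]; exists [seq (c j, s j) | j <- index_enum 'I_n] => w.
by rewrite h /lincomb big_map.
Qed.

Lemma linindep_in_span_le (X : eqType) (f : X -> T p) (P : pred X)
    n (v : 'I_n -> T p) :
  linindep v -> (forall i, in_span f (v i)) ->
  (forall a, ~~ P a -> f a =1 tzero p) ->
  exists U : seq X, [/\ uniq U, all P U & (n <= size U)%N].
Proof.
move=> hind hspan hzero.
have [l hl] := fin_all_exists (fun i => in_span_seq (hspan i)).
pose U := undup [seq a <- map snd (flatten [seq l i | i <- enum 'I_n]) | P a].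
have uU : uniq U := undup_uniq _.
have inU i x : x \in l i -> P x.2 -> x.2 \in U.
  move=> hx hP; rewrite mem_undup mem_filter hP /=; apply: map_f.
  by apply/flattenP; exists (l i) => //; apply: map_f; rewrite mem_enum.
exists U; split => //.
  by apply/allP => a; rewrite mem_undup mem_filter => /andP[].
apply: (linindep_le_span hind) => i.
exists (fun j => \sum_(x <- l i | x.2 == tnth (in_tuple U) j) x.1) => w.
rewrite hl /lincomb.
under [RHS]eq_bigr => j _ do rewrite big_distrl /=.
under [RHS]eq_bigr => j _.
  rewrite (eq_bigr (fun x => x.1 * f x.2 w)); last by move=> x /eqP ->.
  rewrite big_mkcond /=.
over.
rewrite exchange_big /=; apply: eq_big_seq => x hx.
rewrite (sum_tnth_eq _ _ uU); case: ifP => // hxU.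
case: (boolP (P x.2)) => hP; first by rewrite (inU _ _ hx hP) in hxU.
by rewrite hzero // /tzero mulr0.
Qed.

(* Independent vectors supported on a finite set W of words number at most
   |W|: they lie in the span of the indicator functions of W. *)
Lemma linindep_supported_le n (v : 'I_n -> T p) (W : seq word) :
  linindep v -> (forall i w, v i w != 0 -> w \in W) -> (n <= size (undup W))%N.
Proof.
move=> hind hsupp; set W' := undup W.
have uW : uniq W' := undup_uniq W.
pose e (j : 'I_(size W')) : T p := fun w => (w == tnth (in_tuple W') j)%:R.
apply: (linindep_le_span (u := e) hind) => i.
exists (fun j => v i (tnth (in_tuple W') j)) => w; rewrite /lincomb /e.
rewrite (eq_bigr (fun j => if w == tnth (in_tuple W') j then v i w else 0));
  last by move=> j _; rewrite mulr_natr mulrb; case: eqP => [->|].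
rewrite (sum_tnth_eq _ _ uW) mem_undup; case: ifP => // hW.
by apply/eqP/negPn/negP => /hsupp; rewrite hW.
Qed.

Lemma family_indep_comp (X Y : Type) (f : Y -> T p) (g : X -> Y) :
  family_indep f -> injective g -> family_indep (fun x => f (g x)).
Proof. by move=> hf hg n s hs; apply: hf; exact: inj_comp. Qed.

End Span.

Section DegreeWords.
Variable q : nat.

(* [degwords f m]: the words of degree m with at most f letters, generated by
   choosing the first letter (x of degree q+1 or y of degree q). *)
Fixpoint degwords (f m : nat) : seq word :=
  if m == 0%N then [:: [::]] else
  if f is f'.+1 then
    (if (q.+1 <= m)%N then [seq true :: w | w <- degwords f' (m - q.+1)] else [::])
    ++ (if (q <= m)%N then [seq false :: w | w <- degwords f' (m - q)] else [::])
  else [::].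

Lemma degwords_complete w f : (1 <= q)%N -> (size w <= f)%N ->
  w \in degwords f (wdeg q w).
Proof.
move=> hq; elim: w f => [|b w IH] f /=; first by rewrite /wdeg big_nil; case: f.
case: f => // f hs; rewrite wdeg_cons /=.
have -> : ((if b then q.+1 else q) + wdeg q w == 0)%N = false by case: b; lia.
rewrite mem_cat; case: b.
- by rewrite (_ : (q.+1 <= _)%N) ?addKn ?map_f ?IH //; lia.
- by rewrite (_ : (q <= _)%N) ?addKn ?map_f ?IH ?orbT //; lia.
Qed.

Lemma root_ge1 (R : realFieldType) (phi : R) :
  0 < phi -> phi ^+ q.+1 = phi + 1 -> 1 <= phi.
Proof.
move=> hphi0 hphi; rewrite leNgt; apply/negP => h.
have : phi ^+ q.+1 <= phi by rewrite exprS ler_piMr // ?exprn_ile1 ?ltW.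
lra.
Qed.

(* Fibonacci-type count: there are at most phi^m words of degree m, since
   phi^(m-q-1) + phi^(m-q) = phi^m. *)
Lemma size_degwords (R : realFieldType) (phi : R) : 1 <= phi ->
  phi ^+ q.+1 = phi + 1 -> forall f m, (size (degwords f m))%:R <= phi ^+ m.
Proof.
move=> h1 hphi; have phi_pow_ge0 m : 0 <= phi ^+ m by rewrite exprn_ge0 // (le_trans ler01 h1).
elim=> [|f IH] m /=; first by case: eqP => [->|_] /=; rewrite ?expr0.
case: eqP => [->|hm] /=; first by rewrite expr0.
rewrite size_cat natrD; case: (leqP q.+1 m) => h.
- rewrite (_ : (q <= m)%N) ?size_map; last by lia.
  apply: (le_trans (lerD (IH (m - q.+1)%N) (IH (m - q)%N))).
  have -> : (m - q = (m - q.+1).+1)%N by lia.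
  rewrite [in X in _ <= X](_ : m = (m - q.+1) + q.+1)%N; last by lia.
  by rewrite exprD hphi exprS le_eqVlt; apply/orP; left; apply/eqP; ring.
- case: (leqP q m) => h' /=; rewrite ?add0r ?size_map //.
  have -> : (m - q = 0)%N by lia.
  by apply: (le_trans (IH 0%N)); rewrite expr0 exprn_ege1.
Qed.

End DegreeWords.

Lemma size_flatten_le (R : numDomainType) (X : eqType) (Y : Type) (ms : seq X)
    (f : X -> seq Y) (B : R) :
  (forall m, m \in ms -> (size (f m))%:R <= B) ->
  (size (flatten (map f ms)))%:R <= (size ms)%:R * B.
Proof.
elim: ms => [|m ms IH] h /=; first by rewrite mul0r.
rewrite size_cat natrD mulrSr addrC mulrDl mul1r; apply: lerD.
  by apply: IH => m' hm'; apply: h; rewrite in_cons hm' orbT.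
by apply: h; rewrite in_cons eqxx.
Qed.

Section SigmaDegrees.
Variables (p q : nat) (hp3 : (2 < p)%N).
Variables (I : Type) (xa : I -> T p) (degx : I -> nat).
Hypothesis hx : forall a, homog q (degx a) (xa a).

(* The degrees d of x_alpha for which some sigma_k(x_alpha), k >= 1, can have
   degree N, i.e. p^k d = N + 2 (the bound k < N + 3 is automatic). *)
Definition admissible (N d : nat) : bool :=
  [exists k : 'I_N.+3, (0 < k)%N && (p ^ k * d == N.+2)%N].

Lemma admissible_intro N d k : (1 <= k)%N -> (p ^ k * d = N.+2)%N -> admissible N d.
Proof.
move=> hk hd; have d_gt0 : (0 < d)%N by case: d hd => [|d]; rewrite ?muln0.
have hkN : (k < N.+3)%N.
  have : (k < p ^ k)%N by apply: ltn_expl; lia.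
  have : (p ^ k <= p ^ k * d)%N by rewrite leq_pmulr.
  lia.
by apply/existsP; exists (Ordinal hkN); rewrite /= hk hd eqxx.
Qed.

Lemma admissible_bound N d : admissible N d -> (0 < d)%N /\ (p * d <= N.+2)%N.
Proof.
move=> /existsP [k /andP [hk /eqP hd]].
have d_gt0 : (0 < d)%N by case: d hd => [|d]; rewrite ?muln0.
split => //; rewrite -hd leq_mul2r -{1}(expn1 p) leq_pexp2l ?orbT //; lia.
Qed.

(* A family of n independent homogeneous elements of degree N of sigma yields
   n distinct indices alpha of admissible degree: the degree-N part of
   sigma_k(x_alpha) vanishes unless p^k deg x_alpha = N + 2, and for a fixed
   alpha that equation determines k. *)
Lemma sigma_indep_admissible N n (v : 'I_n -> T p) :
  (forall i, in_sigma q xa (v i) /\ homog q N (v i)) -> linindep v ->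
  exists m (s : 'I_m -> I),
    [/\ injective s, (n <= m)%N & forall j, admissible N (degx (s j))].
Proof.
move=> hv hind.
pose X := {classic (I * {k : nat | (1 <= k)%N})}.
pose f (a : X) := hpart q N (sigmak q (sval a.2) (xa a.1)).
pose P (a : X) := (p ^ sval a.2 * degx a.1 == N.+2)%N.
have [U [uU /allP PU hnU]] : exists U : seq X, [/\ uniq U, all P U & (n <= size U)%N].
  apply: (linindep_in_span_le (f := f) hind).
    by move=> i; have [hs hN] := hv i; exact: in_span_hpart hs hN.
  by move=> a hP; exact: hpart_sigmak_eq0 (svalP a.2) (homog_offE (@hx a.1)) hP.
pose al : seq {classic I} := [seq a.1 | a : X <- U].
have ual : uniq al.
  rewrite map_inj_in_uniq // => -[a [k hk]] [b [l hl]] /PU /eqP ha /PU /eqP hb /= eab.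
  move: ha hb; rewrite -eab /= => ha hb.
  have [d_gt0 _] := admissible_bound (admissible_intro hk ha).
  have ekl : k = l by apply: (@expnI p); [lia | apply/eqP; rewrite -(eqn_pmul2r d_gt0) ha hb].
  by subst l; rewrite (eq_irrelevance hk hl).
exists (size al), (tnth (in_tuple al)); split.
- exact: (tuple_uniqP (in_tuple al)).
- by rewrite size_map.
- move=> j; have /mapP [a /PU /eqP ha ->] := mem_tnth j (in_tuple al).
  exact: admissible_intro (svalP a.2) ha.
Qed.

(* Independent x_alpha of admissible degrees are supported on words whose
   degree is admissible, hence their number is at most the number of such
   words. *)
Lemma admissible_indep_le N m (s : 'I_m -> I) : (1 <= q)%N -> (0 < N)%N ->
  family_indep xa -> injective s -> (forall j, admissible N (degx (s j))) ->
  (m <= size (flatten [seq degwords q N d | d <- [seq d <- iota 1 N | admissible N d]]))%N.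
Proof.
move=> hq hN hind s_inj hadm.
apply: leq_trans (size_undup _); apply: (linindep_supported_le (hind _ _ s_inj)).
move=> j w hw; have hdw := hx hw; have [d_gt0 hdN] := admissible_bound (hadm j).
have h3d : (3 * degx (s j) <= p * degx (s j))%N by rewrite leq_mul2r hp3 orbT.
apply/flattenP; exists (degwords q N (degx (s j))).
  by apply: map_f; rewrite mem_filter hadm mem_iota; lia.
by rewrite -hdw degwords_complete //; have := size_le_wdeg w hq; lia.
Qed.

(* There are at most N admissible degrees, each at most (N + 2) / p. *)
Lemma size_admissible_words (R : realType) (phi : R) N :
  1 <= phi -> phi ^+ q.+1 = phi + 1 ->
  (size (flatten [seq degwords q N d | d <- [seq d <- iota 1 N | admissible N d]]))%:R
    <= N%:R * powR phi (N.+2%:R / p%:R).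
Proof.
move=> phi1 hphi; have phi0 : 0 <= phi := le_trans ler01 phi1.
apply: le_trans (size_flatten_le (B := powR phi (N.+2%:R / p%:R)) _) _.
  move=> d; rewrite mem_filter => /andP [/admissible_bound [_ hd] _].
  apply: le_trans (size_degwords phi1 hphi N d) _.
  rewrite -powR_mulrn //; apply: ler_powR => //.
  by rewrite ler_pdivlMr ?ltr0n -?natrM ?ler_nat 1?mulnC //; lia.
rewrite ler_wpM2r ?powR_ge0 // ler_nat size_filter.
by apply: leq_trans (count_size _ _) _; rewrite size_iota.
Qed.

End SigmaDegrees.

Unset Implicit Arguments.

Theorem mainTheorem14
  (p q : nat) (hp : prime p) (hp_odd : odd p) (hq : (1 <= q)%N)
  (* decomposition L = H (+) K *)
  (H : T p -> Prop)
  (hH0 : H (tzero p))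
  (hHadd : forall a b, H a -> H b -> H (tadd a b))
  (hHscale : forall c a, H a -> H (tscale c a))
  (hHext : forall a b, H a -> a =1 b -> H b)
  (hHL : forall a, H a -> inL q a)
  (* basis {x_a, y_a, z_b, w_b} of K *)
  (I J : Type) (xa ya : I -> T p) (zb wb : J -> T p)
  (degx : I -> nat) (degz : J -> nat)
  (hxdeg : forall a, homog q (degx a) (xa a) /\ ~~ odd (degx a))
  (hydeg : forall a, homog q (degx a).-1 (ya a))
  (hzdeg : forall b, homog q (degz b) (zb b) /\ odd (degz b))
  (hwdeg : forall b, homog q (degz b).-1 (wb b))
  (hdx : forall a, tdiff q (xa a) =1 ya a)
  (hdz : forall b, tdiff q (zb b) =1 wb b)
  (hbasisL : forall i : (I + I) + (J + J),
      inL q (fam4 xa ya zb wb i))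
  (hbasis_indep : family_indep (fam4 xa ya zb wb))
  (hdecomp : forall l, inL q l -> exists h k, H h /\
      in_span (fam4 xa ya zb wb) k /\
      l =1 tadd h k)
  (hdirect : forall v, H v ->
      in_span (fam4 xa ya zb wb) v ->
      v =1 tzero p)
  (* phi: the positive real root of z^(q+1) - z - 1 *)
  (R : realType) (phi : R) (hphi0 : 0 < phi)
  (hphi : phi ^+ q.+1 - phi - 1 = 0) :
  forall N : nat, (0 < N)%N ->
    dim_le (fun v => in_sigma q xa v /\ homog q N v)
      ((2 * (q.+2)%:R * powR phi (2 / p%:R)) * N%:R * powR phi (N%:R / p%:R)).
Proof.
move=> N hN n v hv hind.
have hp3 : (2 < p)%N.
  have : p != 2%N by apply: contraTneq hp_odd => ->.
  by have := prime_gt1 hp; lia.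
have hphi' : phi ^+ q.+1 = phi + 1 by lra.
have phi1 : 1 <= phi := root_ge1 hphi0 hphi'.
have hx a : homog q (degx a) (xa a) := (hxdeg a).1.
have xa_indep : family_indep xa.
  by apply: (family_indep_comp (g := fun a => inl (inl a)) hbasis_indep) => a b [].
have [m [s [s_inj hnm hadm]]] := sigma_indep_admissible hp3 hx hv hind.
have hmW := admissible_indep_le hp3 hx hq hN xa_indep s_inj hadm.
have hW := size_admissible_words hp3 N phi1 hphi'.
have hnW : n%:R <= N%:R * powR phi (N.+2%:R / p%:R).
  by apply: le_trans hW; rewrite ler_nat (leq_trans hnm hmW).
(* c_1 N phi^(N/p) = 2(q+2) N phi^((N+2)/p), and 1 <= 2(q+2). *)
have split_pow : powR phi (N.+2%:R / p%:R) = powR phi (2 / p%:R) * powR phi (N%:R / p%:R).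
  by rewrite -powRD ?(gt_eqF hphi0) ?implybT // -mulrDl -natrD add2n.
have -> : 2 * (q.+2)%:R * powR phi (2 / p%:R) * N%:R * powR phi (N%:R / p%:R)
    = 2 * (q.+2)%:R * (N%:R * powR phi (N.+2%:R / p%:R)) by rewrite split_pow; ring.
apply: (le_trans hnW); apply: ler_peMl; first by rewrite mulr_ge0 ?powR_ge0.
by rewrite -natrM ler1n.
Qed.
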